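(* For every $1\le q\le\infty$, the pair $(\ell_2^2(\mathbb{R}),\ell_q^2(\mathbb{R}))$ fails the uniform sBPBp.
   Context: $\ell_p^2(\mathbb{R})$ denotes $\mathbb{R}^2$ with the norm $\|(x,y)\|_p=(|x|^p+|y|^p)^{1/p}$ for $p<\infty$ and $\|(x,y)\|_\infty=\max\{|x|,|y|\}$; $S_X$ is the unit sphere of $X$ and $\mathcal{L}(X,Y)$ the bounded linear operators. A pair of Banach spaces $(X,Y)$ has the uniform strong Bishop–Phelps–Bollobás property (uniform sBPBp) if for every $\varepsilon>0$ there exists $\eta(\varepsilon)>0$ such that whenever $T\in\mathcal{L}(X,Y)$ with $\|T\|=1$ and $x_0\in S_X$ satisfy $\|T(x_0)\|>1-\eta(\varepsilon)$, there exists $x_1\in S_X$ with $\|T(x_1)\|=1$ and $\|x_1-x_0\|<\varepsilon$. *)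

From Stdlib Require Import Reals Lra.
Open Scope R_scope.

Inductive exponent : Type :=
| Fin : R -> exponent
| Inf : exponent.

Definition valid_exponent (p : exponent) : Prop :=
  match p with Fin r => 1 <= r | Inf => True end.

(* a^b for a >= 0, b > 0, with 0^b = 0 (Stdlib's Rpower 0 b is 1). *)
Definition rpow (a b : R) : R :=
  if Rlt_dec 0 a then Rpower a b else 0.

Definition pnorm (p : exponent) (v : R * R) : R :=
  match p with
  | Fin r => rpow (rpow (Rabs (fst v)) r + rpow (Rabs (snd v)) r) (1 / r)
  | Inf => Rmax (Rabs (fst v)) (Rabs (snd v))
  end.

Definition vsub (u v : R * R) : R * R := (fst u - fst v, snd u - snd v).
Definition vadd (u v : R * R) : R * R := (fst u + fst v, snd u + snd v).
Definition vscal (a : R) (v : R * R) : R * R := (a * fst v, a * snd v).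

(* Linear maps R^2 -> R^2 (all are bounded, R^2 being finite-dimensional). *)
Definition is_linear (T : R * R -> R * R) : Prop :=
  (forall u v, T (vadd u v) = vadd (T u) (T v)) /\
  (forall a v, T (vscal a v) = vscal a (T v)).

Definition opnorm_eq (p q : exponent) (T : R * R -> R * R) (c : R) : Prop :=
  is_lub (fun t => exists x, pnorm p x = 1 /\ t = pnorm q (T x)) c.

Definition uniform_sBPBp (p q : exponent) : Prop :=
  forall eps : R, 0 < eps ->
  exists eta : R, 0 < eta /\
    forall (T : R * R -> R * R) (x0 : R * R),
      is_linear T -> opnorm_eq p q T 1 ->
      pnorm p x0 = 1 -> pnorm q (T x0) > 1 - eta ->
      exists x1 : R * R,
        pnorm p x1 = 1 /\ pnorm q (T x1) = 1 /\ pnorm p (vsub x1 x0) < eps.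

(** Let [M] be the norm of the identity [l_2^2 -> l_q^2]. A uniform sBPBp
    forces every norm-one operator to attain its norm, so applied to the
    identity scaled by [1/M] it yields a Euclidean unit vector [u] with
    [||u||_q = M]. Let [w] be [u] rotated by a right angle; the operator
    [T v = (v - d <v, w> w) / M] has norm one (attained at [u]) and
    [||T w||_q = 1 - d], which is arbitrarily close to 1. But [T] attains its
    norm only at unit vectors orthogonal to [w], i.e. at [+-u], whose distance
    to [w] is [sqrt 2]. *)
From Stdlib Require Import Reals Lra Classical.
Open Scope R_scope.

Definition dot (u v : R * R) : R := fst u * fst v + snd u * snd v.

Definition rot (v : R * R) : R * R := (snd v, - fst v).

Definition damp (d : R) (w v : R * R) : R * R := vsub v (vscal (d * dot v w) w).

Lemma Rpower_1_l x : Rpower 1 x = 1.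
Proof. unfold Rpower. rewrite ln_1, Rmult_0_r. apply exp_0. Qed.

Lemma rpow_ge0 a b : 0 <= rpow a b.
Proof. unfold rpow. destruct (Rlt_dec 0 a); [left; apply exp_pos | lra]. Qed.

Lemma rpow_0 b : rpow 0 b = 0.
Proof. unfold rpow. destruct (Rlt_dec 0 0); lra. Qed.

Lemma rpow_1_l b : rpow 1 b = 1.
Proof. unfold rpow. destruct (Rlt_dec 0 1); [apply Rpower_1_l | lra]. Qed.

Lemma rpow_mul k a s : 0 < k -> 0 <= a -> rpow (k * a) s = Rpower k s * rpow a s.
Proof.
  intros Hk Ha. destruct (Req_dec a 0) as [->|Ha0].
  - rewrite Rmult_0_r, !rpow_0. ring.
  - assert (Hka : 0 < k * a) by (apply Rmult_lt_0_compat; lra).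
    unfold rpow. destruct (Rlt_dec 0 (k * a)); destruct (Rlt_dec 0 a); try lra.
    symmetry; apply Rpower_mult_distr; lra.
Qed.

Lemma rpow_Rabs_2 a : rpow (Rabs a) 2 = a * a.
Proof.
  unfold rpow. destruct (Rlt_dec 0 (Rabs a)) as [Ha|Ha].
  - replace 2 with (INR 2) by (simpl; ring). rewrite Rpower_pow by auto.
    simpl. rewrite Rmult_1_r, <- Rabs_mult. apply Rabs_right. nra.
  - assert (a = 0) as -> by (destruct (Req_dec a 0); auto; exfalso; apply Ha, Rabs_pos_lt; auto).
    ring.
Qed.

Lemma rpow_Rabs_le1 a r : 0 <= r -> Rabs a <= 1 -> rpow (Rabs a) r <= 1.
Proof.
  intros Hr Ha. unfold rpow. destruct (Rlt_dec 0 (Rabs a)); [|lra].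
  rewrite <- (Rpower_1_l r). apply Rle_Rpower_l; lra.
Qed.

Lemma pnorm_scal q c v : valid_exponent q -> pnorm q (vscal c v) = Rabs c * pnorm q v.
Proof.
  destruct v as [x y], q as [r|]; simpl; intros Hr; rewrite !Rabs_mult.
  - destruct (Req_dec c 0) as [->|Hc].
    { rewrite Rabs_R0, !Rmult_0_l, !rpow_0, Rplus_0_r, rpow_0. ring. }
    assert (Hk : 0 < Rabs c) by (apply Rabs_pos_lt; auto).
    pose proof (rpow_ge0 (Rabs x) r); pose proof (rpow_ge0 (Rabs y) r).
    rewrite !rpow_mul, <- Rmult_plus_distr_l, rpow_mul by (first [apply Rabs_pos | apply exp_pos | lra]).
    rewrite Rpower_mult. replace (r * (1 / r)) with 1 by (field; lra).
    now rewrite Rpower_1.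
  - apply RmaxRmult, Rabs_pos.
Qed.

Lemma pnorm_Fin2 v : pnorm (Fin 2) v = sqrt (dot v v).
Proof.
  destruct v as [x y]. unfold dot; simpl. rewrite !rpow_Rabs_2. unfold rpow.
  destruct (Rlt_dec 0 (x * x + y * y)).
  - replace (1 / 2) with (/ 2) by field. now apply Rpower_sqrt.
  - replace (x * x + y * y) with 0 by nra. now rewrite sqrt_0.
Qed.

Lemma pnorm_Fin2_eq1 v : pnorm (Fin 2) v = 1 <-> dot v v = 1.
Proof.
  rewrite pnorm_Fin2. split; intros H.
  - assert (0 <= dot v v) by (unfold dot; nra).
    rewrite <- (sqrt_sqrt (dot v v)), H by auto. ring.
  - now rewrite H, sqrt_1.
Qed.

Lemma pnorm_rot q v : pnorm q (rot v) = pnorm q v.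
Proof. destruct q; simpl; rewrite Rabs_Ropp; [f_equal; ring | apply Rmax_comm]. Qed.

Lemma pnorm_e1 q : valid_exponent q -> pnorm q (1, 0) = 1.
Proof.
  destruct q as [r|]; simpl; intros Hr; rewrite Rabs_R0, Rabs_R1.
  - now rewrite rpow_0, Rplus_0_r, !rpow_1_l.
  - unfold Rmax; destruct (Rle_dec 1 0); lra.
Qed.

Lemma pnorm_le2_of_unit q v : valid_exponent q -> dot v v = 1 -> pnorm q v <= 2.
Proof.
  destruct v as [x y]; unfold dot; simpl. intros Hq Hxy.
  assert (Hx : Rabs x <= 1) by (apply Rabs_le; nra).
  assert (Hy : Rabs y <= 1) by (apply Rabs_le; nra).
  destruct q as [r|]; simpl in *.
  - pose proof (rpow_Rabs_le1 x r ltac:(lra) Hx).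
    pose proof (rpow_Rabs_le1 y r ltac:(lra) Hy).
    set (S := rpow (Rabs x) r + rpow (Rabs y) r).
    unfold rpow at 1. destruct (Rlt_dec 0 S); [|lra].
    apply Rle_trans with (Rpower 2 (1 / r)).
    + apply Rle_Rpower_l; [apply Rlt_le, Rdiv_lt_0_compat; lra | split; [lra | unfold S; lra]].
    + rewrite <- (Rpower_1 2) at 2 by lra. apply Rle_Rpower; [lra|].
      apply Rmult_le_reg_r with r; [lra|]. replace (1 / r * r) with 1 by (field; lra). lra.
  - unfold Rmax; destruct (Rle_dec _ _); lra.
Qed.

Lemma pnorm_le_of_unit_bound q M v : valid_exponent q ->
  (forall x, pnorm (Fin 2) x = 1 -> pnorm q x <= M) ->
  pnorm q v <= M * pnorm (Fin 2) v.
Proof.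
  intros Hq HM. rewrite (pnorm_Fin2 v). set (n := sqrt (dot v v)).
  assert (Hvv : 0 <= dot v v) by (unfold dot; nra).
  assert (Hn : n * n = dot v v) by (apply sqrt_sqrt; auto).
  destruct (Req_dec n 0) as [H0|H0].
  - assert (v = vscal 0 v) as ->.
    { destruct v as [x y]; unfold dot in Hn; simpl in Hn.
      unfold vscal; simpl; f_equal; nra. }
    rewrite pnorm_scal, Rabs_R0 by auto. rewrite H0. lra.
  - assert (Hnp : 0 < n) by (pose proof (sqrt_pos (dot v v)); unfold n in *; lra).
    assert (Hv : v = vscal n (vscal (/ n) v)).
    { destruct v; unfold vscal; simpl; f_equal; field; lra. }
    assert (Hu : pnorm (Fin 2) (vscal (/ n) v) = 1).
    { rewrite pnorm_scal, pnorm_Fin2 by (simpl; lra). fold n.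
      rewrite Rabs_right by (apply Rle_ge, Rlt_le, Rinv_0_lt_compat; lra). field; lra. }
    rewrite Hv, pnorm_scal, Rabs_right by (auto; lra).
    pose proof (HM _ Hu). nra.
Qed.

Lemma is_lub_approx E c e : is_lub E c -> 0 < e -> exists t, E t /\ c - e < t.
Proof.
  intros [_ Hleast] He. apply NNPP. intros Hno.
  assert (c <= c - e); [|lra].
  apply Hleast. intros t Et. apply Rnot_lt_le. intros Hlt. apply Hno. now exists t.
Qed.

Lemma opnorm_eq_attained p q T c u :
  (forall x, pnorm p x = 1 -> pnorm q (T x) <= c) ->
  pnorm p u = 1 -> pnorm q (T u) = c -> opnorm_eq p q T c.
Proof.
  intros Hub Hu HTu. split.
  - intros t [x [Hx ->]]. auto.
  - intros b Hb. apply Hb. now exists u.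
Qed.

Lemma opnorm_eq_scal p q T c k : valid_exponent q -> 0 < k ->
  opnorm_eq p q T c -> opnorm_eq p q (fun v => vscal k (T v)) (k * c).
Proof.
  intros Hq Hk [Hub Hleast].
  assert (Hnorm : forall x, pnorm q (vscal k (T x)) = k * pnorm q (T x)).
  { intros x. now rewrite pnorm_scal, Rabs_right by (auto; lra). }
  split.
  - intros t [x [Hx ->]]. rewrite Hnorm.
    apply Rmult_le_compat_l; [lra|]. apply Hub. now exists x.
  - intros b Hb.
    assert (Hc : c <= b / k).
    { apply Hleast. intros t [x [Hx ->]].
      apply Rmult_le_reg_l with k; [lra|].
      replace (k * (b / k)) with b by (field; lra).
      rewrite <- Hnorm. apply Hb. now exists x. }
    apply Rmult_le_compat_l with (r := k) in Hc; [|lra].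
    replace (k * (b / k)) with b in Hc by (field; lra). exact Hc.
Qed.

Lemma is_linear_scal k T : is_linear T -> is_linear (fun v => vscal k (T v)).
Proof.
  intros [Hadd Hscal]. split.
  - intros u v. rewrite Hadd. destruct (T u), (T v).
    unfold vscal, vadd; simpl; f_equal; ring.
  - intros a v. rewrite Hscal. destruct (T v). unfold vscal; simpl; f_equal; ring.
Qed.

Lemma is_linear_id : is_linear (fun v => v).
Proof. now split. Qed.

Lemma is_linear_damp d w : is_linear (damp d w).
Proof.
  destruct w as [a b]. split.
  - intros [x1 y1] [x2 y2]. unfold damp, dot, vsub, vscal, vadd; simpl; f_equal; ring.
  - intros c [x y]. unfold damp, dot, vsub, vscal; simpl; f_equal; ring.
Qed.

Section Damping.

Variables (d : R) (w : R * R).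
Hypothesis w_unit : dot w w = 1.

Lemma dot_damp v : dot (damp d w v) (damp d w v) = dot v v - d * (2 - d) * (dot v w) ^ 2.
Proof.
  destruct v as [x y], w as [a b]. unfold damp, dot, vsub, vscal in *; simpl in *.
  transitivity (x * x + y * y - d * (2 - d) * (x * a + y * b) ^ 2
                + (d * (x * a + y * b)) ^ 2 * (a * a + b * b - 1)); [ring|].
  rewrite w_unit. ring.
Qed.

Lemma damp_self : damp d w w = vscal (1 - d) w.
Proof.
  destruct w as [a b]. unfold damp, dot, vsub, vscal in *; simpl in *.
  rewrite w_unit. f_equal; ring.
Qed.

Lemma damp_orthogonal v : dot v w = 0 -> damp d w v = v.
Proof.
  intros Hvw. destruct v as [x y]. unfold damp, vsub, vscal. rewrite Hvw.
  simpl; f_equal; ring.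
Qed.

Hypothesis d_range : 0 < d < 2.

Lemma pnorm_damp_le1 v : dot v v = 1 -> pnorm (Fin 2) (damp d w v) <= 1.
Proof.
  intros Hv. rewrite pnorm_Fin2, dot_damp, Hv.
  assert (0 <= d * (2 - d) * dot v w ^ 2) by (apply Rmult_le_pos; nra).
  rewrite <- sqrt_1 at 2. apply sqrt_le_1_alt. lra.
Qed.

Lemma dot_eq0_of_pnorm_damp v : dot v v = 1 -> 1 <= pnorm (Fin 2) (damp d w v) -> dot v w = 0.
Proof.
  intros Hv. rewrite pnorm_Fin2, dot_damp, Hv. set (s := 1 - _). intros H1.
  assert (Hs : 1 <= s).
  { destruct (Rle_lt_dec 0 s) as [Hs|Hs].
    - rewrite <- (sqrt_sqrt s Hs). pose proof (sqrt_pos s). nra.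
    - rewrite sqrt_neg_0 in H1 by lra. lra. }
  unfold s in Hs. assert (Hsq : dot v w ^ 2 <= 0).
  { apply Rmult_le_reg_l with (d * (2 - d)); [nra | lra]. }
  simpl in Hsq. nra.
Qed.

End Damping.

Lemma pnorm_sub_orthogonal u v : dot u u = 1 -> dot v v = 1 -> dot u v = 0 ->
  pnorm (Fin 2) (vsub u v) = sqrt 2.
Proof.
  intros Hu Hv Huv. rewrite pnorm_Fin2. f_equal.
  destruct u, v; unfold dot, vsub in *; simpl in *. nra.
Qed.

Lemma uniform_sBPBp_norm_attaining p q T : uniform_sBPBp p q ->
  is_linear T -> opnorm_eq p q T 1 -> exists x, pnorm p x = 1 /\ pnorm q (T x) = 1.
Proof.
  intros HsB HT Hop. destruct (HsB 1 ltac:(lra)) as [eta [Heta HsB1]].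
  destruct (is_lub_approx _ _ _ Hop Heta) as [t [[x0 [Hx0 ->]] Ht]].
  destruct (HsB1 T x0 HT Hop Hx0) as [x1 [Hx1 [HTx1 _]]]; [lra|].
  now exists x1.
Qed.

Lemma opnorm_eq_id_exists q : valid_exponent q ->
  exists M, 1 <= M /\ opnorm_eq (Fin 2) q (fun v => v) M.
Proof.
  intros Hq.
  assert (He1 : pnorm (Fin 2) (1, 0) = 1 /\ 1 = pnorm q (1, 0)).
  { split; [apply pnorm_e1; simpl; lra | symmetry; now apply pnorm_e1]. }
  destruct (upper_bound_thm (fun t => exists x, pnorm (Fin 2) x = 1 /\ t = pnorm q x))
    as [M HM].
  - exists 2. intros t [x [Hx ->]]. apply pnorm_le2_of_unit; auto. now apply pnorm_Fin2_eq1.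
  - now exists 1, (1, 0).
  - exists M. split; [|exact HM]. apply HM. now exists (1, 0).
Qed.

Lemma sup_attained_of_uniform_sBPBp q : valid_exponent q -> uniform_sBPBp (Fin 2) q ->
  exists M u, 0 < M /\ opnorm_eq (Fin 2) q (fun v => v) M /\
    dot u u = 1 /\ pnorm q u = M.
Proof.
  intros Hq HsB. destruct (opnorm_eq_id_exists q Hq) as [M [HM1 HM]].
  assert (Hk : 0 < / M) by (apply Rinv_0_lt_compat; lra).
  assert (Hop : opnorm_eq (Fin 2) q (fun v => vscal (/ M) v) 1).
  { replace 1 with (/ M * M) by (field; lra). now apply opnorm_eq_scal. }
  destruct (uniform_sBPBp_norm_attaining _ _ _ HsB (is_linear_scal (/ M) _ is_linear_id) Hop)
    as [u [Hu HMu]].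
  rewrite pnorm_scal, Rabs_right in HMu by (auto; lra).
  exists M, u. split; [lra | split; [exact HM | split]].
  - now apply pnorm_Fin2_eq1.
  - apply Rmult_eq_reg_l with (/ M); [rewrite Rinv_l|]; lra.
Qed.

Section Counterexample.

Variables (q : exponent) (M d : R) (u : R * R).
Hypotheses (q_valid : valid_exponent q) (M_pos : 0 < M)
  (M_sup : opnorm_eq (Fin 2) q (fun v => v) M)
  (u_unit : dot u u = 1) (u_max : pnorm q u = M) (d_range : 0 < d < 1).

Let w := rot u.
Let T v := vscal (/ M) (damp d w v).

Let w_unit : dot w w = 1.
Proof. unfold w, rot, dot in *; simpl; lra. Qed.

Let u_orth : dot u w = 0.
Proof. unfold w, rot, dot; simpl; ring. Qed.

Let pnorm_T v : pnorm q (T v) <= pnorm (Fin 2) (damp d w v).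
Proof.
  unfold T. rewrite pnorm_scal, Rabs_right
    by (auto; apply Rle_ge, Rlt_le, Rinv_0_lt_compat; lra).
  apply Rmult_le_reg_l with M; [lra|]. rewrite <- Rmult_assoc, Rinv_r, Rmult_1_l by lra.
  apply pnorm_le_of_unit_bound; auto.
  intros x Hx. apply M_sup. now exists x.
Qed.

Lemma is_linear_counterexample : is_linear T.
Proof. apply is_linear_scal, is_linear_damp. Qed.

Lemma opnorm_counterexample : opnorm_eq (Fin 2) q T 1.
Proof.
  apply opnorm_eq_attained with u.
  - intros x Hx. apply pnorm_Fin2_eq1 in Hx.
    eapply Rle_trans; [apply pnorm_T | apply pnorm_damp_le1; auto; lra].
  - now apply pnorm_Fin2_eq1.
  - unfold T. rewrite damp_orthogonal, pnorm_scal, u_max, Rabs_right by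
      (auto; apply Rle_ge, Rlt_le, Rinv_0_lt_compat; lra).
    field; lra.
Qed.

Lemma pnorm_counterexample_rot : pnorm q (T w) = 1 - d.
Proof.
  unfold T. rewrite damp_self, !pnorm_scal by auto.
  unfold w. rewrite pnorm_rot, u_max, (Rabs_right (1 - d)) by lra.
  rewrite Rabs_right by (apply Rle_ge, Rlt_le, Rinv_0_lt_compat; lra). field; lra.
Qed.

Lemma counterexample_far_from_norming x : pnorm (Fin 2) x = 1 -> pnorm q (T x) = 1 ->
  pnorm (Fin 2) (vsub x w) = sqrt 2.
Proof.
  intros Hx HTx. apply pnorm_Fin2_eq1 in Hx.
  apply pnorm_sub_orthogonal; auto.
  apply (dot_eq0_of_pnorm_damp d w); auto; [lra|].
  rewrite <- HTx. apply pnorm_T.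
Qed.

End Counterexample.

Theorem mainTheorem10 :
  forall q : exponent, valid_exponent q -> ~ uniform_sBPBp (Fin 2) q.
Proof.
  intros q Hq HsB.
  destruct (sup_attained_of_uniform_sBPBp q Hq HsB) as [M [u [HM [Hsup [Hu HuM]]]]].
  destruct (HsB 1 Rlt_0_1) as [eta [Heta HsB1]].
  pose proof (Rmin_l (eta / 2) (1 / 2)); pose proof (Rmin_r (eta / 2) (1 / 2)).
  assert (0 < Rmin (eta / 2) (1 / 2)) by (apply Rmin_glb_lt; lra).
  set (d := Rmin (eta / 2) (1 / 2)) in *.
  set (T := fun v => vscal (/ M) (damp d (rot u) v)).
  assert (Hrot : pnorm (Fin 2) (rot u) = 1) by (rewrite pnorm_rot; now apply pnorm_Fin2_eq1).
  destruct (HsB1 T (rot u)) as [x1 [Hx1 [HTx1 Hdist]]]; auto.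
  - apply is_linear_counterexample.
  - apply opnorm_counterexample; auto; lra.
  - unfold T. rewrite pnorm_counterexample_rot by (auto; lra). lra.
  - rewrite (counterexample_far_from_norming q M d u) in Hdist by (auto; lra).
    pose proof (sqrt_lt_1_alt 1 2 ltac:(lra)). rewrite sqrt_1 in *. lra.
Qed.
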